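(* Let $k>1$ and let $\mathcal{F}_1$ be the foliation on $\mathbb{P}^2_k=\mathbb{P}(1,1,k)$ (of normal degree $2k+1$) induced by $$\delta=-k\,x_2(x_2-x_0x_1^{k-1})dx_0+k\,x_0x_2(x_1^{k-1}-x_0x_1^{k-2})dx_1+x_0(x_2-x_1^{k})dx_2.$$ Then no $\mathcal{F}_1$-invariant algebraic curve passes through the point $[1:1:1]$.
   Context: $\mathbb{P}(1,1,k)$ is the quotient of $\mathbb{C}^3\setminus\{0\}$ by $t\cdot(x_0,x_1,x_2)=(tx_0,tx_1,t^kx_2)$. An algebraic curve is the zero set of a nonconstant quasi-homogeneous polynomial $F$ (weights $1,1,k$); it is invariant by the foliation defined by $\delta$ if $\delta\wedge dF=F\Theta$ for some polynomial 2-form $\Theta$. *)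

From Stdlib Require Import Reals.
From mathcomp Require Import all_boot all_algebra.
From mathcomp Require Import Rstruct complex.
From mathcomp Require Import mpoly.
Set Implicit Arguments. Unset Strict Implicit. Unset Printing Implicit Defensive.
Import GRing.Theory.
Local Open Scope ring_scope.

Definition CC : fieldType := complex Rdefinitions.R.

Notation poly3 := {mpoly CC[3]}.

Definition i0 : 'I_3 := @Ordinal 3 0 isT.
Definition i1 : 'I_3 := @Ordinal 3 1 isT.
Definition i2 : 'I_3 := @Ordinal 3 2 isT.

Definition wdeg (k : nat) (m : 'X_{1..3}) : nat := (m i0 + m i1 + k * m i2)%N.

Definition quasi_homogeneous (k : nat) (F : poly3) : Prop :=
  exists d : nat, forall m, m \in msupp F -> wdeg k m = d.

Definition nonconstant (F : poly3) : Prop := forall c : CC, F <> c%:MP.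

Definition delta_coef (k : nat) (i : 'I_3) : poly3 :=
  let x0 := 'X_i0 in let x1 := 'X_i1 in let x2 := 'X_i2 in
  if val i == 0%N then - (k%:R) * x2 * (x2 - x0 * x1 ^+ (k.-1))
  else if val i == 1%N then k%:R * x0 * x2 * (x1 ^+ (k.-1) - x0 * x1 ^+ (k.-2))
  else x0 * (x2 - x1 ^+ k).

(* coefficient of dx_i /\ dx_j in delta /\ dF *)
Definition wedge_dF (k : nat) (F : poly3) (i j : 'I_3) : poly3 :=
  delta_coef k i * F^`M(j) - delta_coef k j * F^`M(i).

(* delta /\ dF = F * Theta for some polynomial 2-form
   Theta = sum_{i<j} Theta_ij dx_i /\ dx_j *)
Definition invariant_by (k : nat) (F : poly3) : Prop :=
  exists Theta : 'I_3 -> 'I_3 -> poly3,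
    forall i j : 'I_3, (i < j)%N -> wedge_dF k F i j = F * Theta i j.

Definition vanishes_at_111 (F : poly3) : Prop := F.@[fun _ : 'I_3 => (1 : CC)] = 0.

From mathcomp Require Import all_boot all_algebra.
From mathcomp Require Import mpoly Rstruct complex.
From mathcomp Require Import polyXY ring zify.
Set Implicit Arguments. Unset Strict Implicit. Unset Printing Implicit Defensive.
Import GRing.Theory Num.Theory.
Local Open Scope ring_scope.

(* Dehomogenize at x1 = 1, writing bivariate polynomials with x2 = 'X and
   x0 = 'Y.  The (0,2)-component of delta /\ dF = F Theta says that
   f = F(x0, 1, x2) satisfies V f = g f for the vector field
   V = x0 (x2 - 1) d/dx0 + k x2 (x2 - x0) d/dx2.  The axes x0 = 0 and x2 = 0
   are V-invariant and cofactors add up under products, so f = x0^a x2^b q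
   with q invariant and divisible by neither axis.  Looking at the
   x2^0-coefficient of V q = h q, at its restriction to x0 = 0 (where
   V = k x2^2 d/dx2) and at its top x2-coefficient shows that q is a nonzero
   constant; hence F(1, 1, 1) = f(1, 1) <> 0.  Quasi-homogeneity is only
   used to see that F(x0, 1, x2) <> 0. *)

Lemma size_cofactor_le (R : idomainType) (p q : {poly R}) n :
  p != 0 -> (size (q * p)%R <= size p + n)%N -> (size q <= n.+1)%N.
Proof.
have [->|q0 p0] := eqVneq q 0; first by rewrite size_poly0.
rewrite size_mul //; have := size_poly_gt0 p; have := size_poly_gt0 q.
rewrite p0 q0; lia.
Qed.

Lemma coefX_deriv (R : nzRingType) (p : {poly R}) i : ('X * p^`())`_i = p`_i *+ i.
Proof. by rewrite coefXM; case: i => [|i] //=; rewrite ?mulr0n // coef_deriv. Qed.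

Lemma size_X_deriv (R : idomainType) (p : {poly R}) : (size ('X * p^`())%R <= size p)%N.
Proof.
have [->|p0] := eqVneq p^`() 0; first by rewrite mulr0 size_poly0.
rewrite mulrC size_mulX // lt_size_deriv //.
by apply: contraNneq p0 => ->; rewrite deriv0.
Qed.

Lemma X2_deriv_cofactor_coef0 (R : numDomainType) k (h c : {poly R}) :
  h != 0 -> ('X * ('X * h^`())) *+ k = c * h -> c`_0 = 0.
Proof.
move=> h0; have [m [q]] := multiplicity_XsubC h 0.
rewrite h0 subr0 /= rootE horner_coef0 => /negbTE q0 Dh.
move=> /(congr1 (fun p : {poly R} => p`_m)).
have -> : (c * h)`_m = c`_0 * q`_0 by rewrite Dh mulrA coefMXn ltnn subnn coef0M.
have -> : (('X * ('X * h^`())) *+ k)`_m = 0.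
  rewrite coefMn coefXM Dh; case: m {Dh} => [|m] /=; first by rewrite mul0rn.
  by rewrite coefX_deriv coefMXn ltnSn !mul0rn.
by move/esym/eqP; rewrite mulf_eq0 q0 orbF => /eqP.
Qed.

Lemma X_deriv_add_muln_eq0 (R : numDomainType) (p : {poly R}) m :
  (0 < m)%N -> 'X * p^`() + p *+ m = 0 -> p = 0.
Proof.
move=> m0 /polyP Dp; apply/polyP => j; have /eqP := Dp j.
rewrite coefD coefX_deriv coefMn coef0 -mulrnDr mulrn_eq0 addn_eq0.
by rewrite (negbTE (lt0n_neq0 m0)) andbF => /eqP.
Qed.

Local Notation derivY := (map_poly deriv).

Section VectorField.
Variables (R : numDomainType) (k : nat).
Implicit Types (f g p q c : {poly {poly R}}).

(* The vector field V, with derivY = d/dx0 and ^`() = d/dx2. *)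
Definition derV p := 'Y * ('X - 1) * derivY p + ('X * ('X - 'Y)) *+ k * p^`().

Definition atY0 p : {poly R} := map_poly (horner_eval 0) p.

Lemma coef_derivY p i : (derivY p)`_i = (p`_i)^`().
Proof. by rewrite coef_map. Qed.

Lemma derivYM p q : derivY (p * q) = derivY p * q + p * derivY q.
Proof.
apply/polyP=> i; rewrite coef_derivY coefD !coefM raddf_sum -big_split /=.
by apply: eq_bigr => j _; rewrite derivM !coef_derivY.
Qed.

Lemma derivYX : derivY 'X = 0 :> {poly {poly R}}.
Proof.
apply/polyP=> i; rewrite coef_derivY coefX coef0.
by case: (i == 1)%N; rewrite ?derivC // -polyC1 derivC.
Qed.

Lemma derivYY : derivY 'Y = 1 :> {poly {poly R}}.
Proof. by rewrite map_polyC /= derivX. Qed.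

Lemma derVM p q : derV (p * q) = derV p * q + p * derV q.
Proof. by rewrite /derV derivYM derivM; ring. Qed.

Lemma derVX : derV 'X = ('X - 'Y) *+ k * 'X.
Proof. by rewrite /derV derivYX derivX; ring. Qed.

Lemma derVY : derV 'Y = ('X - 1) * 'Y.
Proof. by rewrite /derV derivYY derivC; ring. Qed.

Lemma derV_cofactorM p q c d :
  derV p = c * p -> derV q = d * q -> derV (p * q) = (c + d) * (p * q).
Proof. by rewrite derVM => -> ->; ring. Qed.

Lemma derV_cofactorX p c n : derV p = c * p -> derV (p ^+ n) = c *+ n * p ^+ n.
Proof.
move=> Dp; elim: n => [|n IHn].
  by rewrite !expr0 mulr1 /derV -polyC1 map_polyC /= !derivC; ring.
by rewrite exprS (derV_cofactorM Dp IHn) mulrS.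
Qed.

Lemma derV_cofactorKl p q c g :
  p != 0 -> derV p = c * p -> derV (p * q) = g * (p * q) -> derV q = (g - c) * q.
Proof.
move=> p0; rewrite derVM => -> Dpq; apply: (mulfI p0).
have -> : p * ((g - c) * q) = g * (p * q) - c * p * q by ring.
by rewrite -Dpq; ring.
Qed.

Lemma coef_derV f i : (derV f)`_i =
  'X * ((if i is j.+1 then (f`_j)^`() else 0) - (f`_i)^`()) +
  ((if i is j.+1 then f`_j *+ j else 0) - 'X * (f`_i *+ i)) *+ k.
Proof.
have -> : derV f = 'Y * ('X * derivY f) - 'Y * derivY f
                   + ('X * ('X * f^`())) *+ k - ('Y * ('X * f^`())) *+ k.
  by rewrite /derV; ring.
rewrite !(coefD, coefB, coefN, coefMn, coefCM) [('X * ('X * _))`_i]coefXM !coefX_deriv.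
by case: i => [|i] /=; rewrite !coefXM !coef_derivY ?mulr0n /=; ring.
Qed.

Lemma size_derV f : (size (derV f) <= (size f).+1)%N.
Proof.
apply/leq_sizeP => [[|i]] //; rewrite ltnS => lt_f_i.
rewrite coef_derV !nth_default ?(leq_trans lt_f_i) //.
by rewrite deriv0 !mul0rn subrr mulr0 subr0 mul0rn addr0.
Qed.

Lemma atY0_derV f : atY0 (derV f) = ('X * ('X * (atY0 f)^`())) *+ k.
Proof.
rewrite /derV /atY0 !(rmorphD, rmorphB, rmorphN, rmorphM, rmorphMn, rmorph1) /=.
rewrite map_polyC map_polyX /=.
by rewrite horner_evalE hornerX polyC0 deriv_map; ring.
Qed.

Lemma coef_atY0 p i : (atY0 p)`_i = p`_i`_0.
Proof. by rewrite coef_map /= horner_evalE horner_coef0. Qed.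

Lemma atY0M p q : atY0 (p * q) = atY0 p * atY0 q.
Proof. exact: rmorphM. Qed.

Lemma atY0E p : atY0 p = (swapXY p)`_0.
Proof. by rewrite -horner_coef0 -polyC0 horner_swapXY. Qed.

Lemma split_monomial_factor f : f != 0 ->
  exists a b q, [/\ f = 'Y ^+ a * 'X ^+ b * q, q`_0 != 0 & atY0 q != 0].
Proof.
(* The power of x0 is split off as a power of 'X in swapXY f. *)
move=> f0; have [a [q1]] := multiplicity_XsubC (swapXY f) 0.
rewrite swapXY_eq0 f0 subr0 rootE horner_coef0 /= => q100 Dsf.
have Df : f = 'Y ^+ a * swapXY q1.
  by rewrite -[f]swapXYK Dsf rmorphM rmorphXn /= swapXY_X mulrC.
have q10 : swapXY q1 != 0 by apply: contraNneq f0; rewrite Df => ->; rewrite mulr0.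
have [b [q]] := multiplicity_XsubC (swapXY q1) 0.
rewrite q10 subr0 rootE horner_coef0 /= => q00 Dq1.
exists a, b, q; split => //; first by rewrite Df Dq1 [q * _]mulrC mulrA.
apply: contraNneq q100 => atq0.
by rewrite -[q1]swapXYK -atY0E Dq1 atY0M atq0 mul0r.
Qed.

Section Invariant.
Variables f g : {poly {poly R}}.
Hypothesis derVf : derV f = g * f.

Lemma atY0_invariant : ('X * ('X * (atY0 f)^`())) *+ k = atY0 g * atY0 f.
Proof. by rewrite -atY0_derV derVf atY0M. Qed.

Lemma invariant_cofactor_coef00 : atY0 f != 0 -> g`_0`_0 = 0.
Proof.
by move=> f0; rewrite -coef_atY0; apply: X2_deriv_cofactor_coef0 atY0_invariant.
Qed.

Lemma invariant_coef0_const : f`_0 != 0 -> g`_0`_0 = 0 -> f`_0 = (f`_0`_0)%:P.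
Proof.
move=> f00 g00.
have slice0 : - ('X * (f`_0)^`()) = g`_0 * f`_0.
  have := congr1 (fun p => p`_0) derVf; rewrite coef_derV coef0M /=.
  by rewrite mulr0n mulr0 subrr mul0rn addr0 sub0r mulrN.
have g0C : g`_0 = (g`_0`_0)%:P.
  apply: size1_polyC; apply: (size_cofactor_le f00).
  by rewrite -slice0 size_polyN addn0 size_X_deriv.
apply: size1_polyC; apply/leq_sizeP => j lt0j.
have := congr1 (fun p : {poly R} => p`_j) slice0.
rewrite coefN coefX_deriv g0C g00 mul0r coef0.
by move/eqP; rewrite oppr_eq0 mulrn_eq0 (negbTE (lt0n_neq0 lt0j)) /= => /eqP.
Qed.

Lemma invariant_cofactor_coef10 : f`_0`_0 != 0 -> g`_0`_0 = 0 -> g`_1`_0 = 0.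
Proof.
move=> f000 g00; have /eqP := congr1 (fun p : {poly R} => p`_1) atY0_invariant.
rewrite coefMn !coefXM /= mul0rn coefM !big_ord_recl big_ord0 /= !coef_atY0 g00.
by rewrite mul0r add0r addr0 eq_sym mulf_eq0 (negbTE f000) orbF => /eqP.
Qed.

Lemma invariant_size1 : (0 < k)%N -> f != 0 -> g`_1`_0 = 0 -> size f = 1%N.
Proof.
move=> k0 f0 g10; set n := (size f).-1.
have Dsize : size f = n.+1 by rewrite prednK // size_poly_gt0.
have fn0 : f`_n != 0 by rewrite -lead_coef_eq0 /lead_coef Dsize in f0.
have size_g : (size g <= 2)%N.
  by apply: (size_cofactor_le f0); rewrite -derVf addn1 size_derV.
have top : 'X * (f`_n)^`() + f`_n *+ n *+ k = g`_1 * f`_n.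
  have := congr1 (fun p => p`_n.+1) derVf.
  rewrite coef_derV [f`_n.+1]nth_default ?Dsize //.
  rewrite deriv0 subr0 mul0rn mulr0 subr0 => ->.
  rewrite coefM !big_ord_recl /= big1 ?addr0 => [|i _]; last first.
    by rewrite nth_default ?mul0r // (leq_trans size_g).
  by rewrite [f`_n.+1]nth_default ?Dsize // mulr0 add0r subSS subn0.
have g1C : g`_1 = (g`_1`_0)%:P.
  apply: size1_polyC; apply: (size_cofactor_le fn0).
  rewrite -top addn0; apply/leq_sizeP => j lt_fn_j.
  by rewrite coefD coefX_deriv !coefMn nth_default // !mul0rn addr0.
move: top; rewrite g1C g10 mul0r -mulrnA => /X_deriv_add_muln_eq0.
case: n => [|n] in Dsize fn0 * => //.
by rewrite muln_gt0 k0 => /(_ isT) /eqP; rewrite (negbTE fn0).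
Qed.

Lemma invariant_const :
  (0 < k)%N -> f`_0 != 0 -> atY0 f != 0 -> f = (f`_0`_0)%:P%:P.
Proof.
move=> k0 f00 atf0.
have g00 := invariant_cofactor_coef00 atf0.
have Df0 := invariant_coef0_const f00 g00.
have f000 : f`_0`_0 != 0 by rewrite Df0 polyC_eq0 in f00.
have f0 : f != 0 by apply: contraNneq f00 => ->; rewrite coef0.
have g10 := invariant_cofactor_coef10 f000 g00.
by rewrite -Df0; apply/size1_polyC; rewrite (invariant_size1 k0 f0 g10).
Qed.

End Invariant.

Lemma invariant_horner11_neq0 f g :
  (0 < k)%N -> f != 0 -> derV f = g * f -> f.[1, 1] != 0.
Proof.
move=> k0 f0 derVf; have [a [b [q [Df q00 atq0]]]] := split_monomial_factor f0.
have derVm : derV ('Y ^+ a * 'X ^+ b)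
              = (('X - 1) *+ a + ('X - 'Y) *+ k *+ b) * ('Y ^+ a * 'X ^+ b).
  exact: derV_cofactorM (derV_cofactorX a derVY) (derV_cofactorX b derVX).
have m0 : 'Y ^+ a * 'X ^+ b != 0 :> {poly {poly R}}.
  by apply: contraNneq f0; rewrite Df => ->; rewrite mul0r.
rewrite Df in derVf; have derVq := derV_cofactorKl m0 derVm derVf.
have Dq := invariant_const derVq k0 q00 atq0.
rewrite Df Dq !hornerE !expr1n !mul1r.
by rewrite Dq coefC polyC_eq0 in q00.
Qed.

End VectorField.

Lemma eq_monomial_of_wdeg k (m m' : 'X_{1..3}) :
  wdeg k m = wdeg k m' -> m i0 = m' i0 -> m i2 = m' i2 -> m = m'.
Proof.
rewrite /wdeg => + e0 e2; rewrite e0 e2 => /eqP; rewrite eqn_add2r eqn_add2l => /eqP e1.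
apply/mnmP => -[[|[|[|i]]] lti] //.
- by rewrite (_ : Ordinal lti = i0) //; apply: val_inj.
- by rewrite (_ : Ordinal lti = i1) //; apply: val_inj.
- by rewrite (_ : Ordinal lti = i2) //; apply: val_inj.
Qed.

Definition dehomog_var (i : 'I_3) : {poly {poly CC}} := [:: 'Y; 1; 'X]`_i.

Local Notation dehomog := (mmap (polyC \o polyC) dehomog_var).

Section Dehomogenization.
Variable k : nat.
Implicit Type F : poly3.

Lemma mmap1_dehomog_var m : mmap1 dehomog_var m = 'Y ^+ m i0 * 'X^(m i2).
Proof.
rewrite /mmap1 !big_ord_recl big_ord0 /dehomog_var /= expr1n mul1r mulr1.
by congr ('Y ^+ m _ * 'X^(m _)); apply: val_inj.
Qed.

Lemma dehomog_monomial c m :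
  dehomog (c *: 'X_[m]) = (c%:P * 'X^(m i0))%:P * 'X^(m i2).
Proof. by rewrite mmapZ mmapX mmap1_dehomog_var mulrA -polyC_exp -polyCM. Qed.

Lemma derivY_CMXn (p : {poly CC}) n : derivY (p%:P * 'X^n) = (p^`())%:P * 'X^n.
Proof. by apply/polyP=> i; rewrite coef_derivY !coefCM coefXn !mulr_natr derivMn. Qed.

Lemma dehomog_mderiv0 F : dehomog (F^`M(i0)) = derivY (dehomog F).
Proof.
elim/mpolyind: F => [|c m F _ _ IH]; first by rewrite !raddf0.
rewrite !raddfD /= IH mderivZ mderivX scalerA !dehomog_monomial derivY_CMXn.
rewrite !mnmBE !mnm1E /= subn0 subn1 deriv_mulC derivXn.
by rewrite !rmorphM !rmorph_nat; congr (_ + _); ring.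
Qed.

Lemma dehomog_mderiv2 F : dehomog (F^`M(i2)) = (dehomog F)^`().
Proof.
elim/mpolyind: F => [|c m F _ _ IH]; first by rewrite !raddf0.
rewrite !raddfD /= IH mderivZ mderivX scalerA !dehomog_monomial deriv_mulC derivXn.
rewrite !mnmBE !mnm1E /= subn0 subn1 !rmorphM !rmorph_nat.
by congr (_ + _); ring.
Qed.

Lemma dehomog_wedge02 F : dehomog (wedge_dF k F i0 i2) = - derV k (dehomog F).
Proof.
rewrite /wedge_dF /delta_coef /= !(rmorphB, rmorphN, rmorphM, rmorph_nat, rmorphXn) /=.
rewrite !mmapX !mmap1U /dehomog_var /= !expr1n mulr1.
by rewrite dehomog_mderiv0 dehomog_mderiv2 /derV; ring.
Qed.

Lemma horner11_dehomog F : (dehomog F).[1, 1] = F.@[fun _ => 1].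
Proof.
elim/mpolyind: F => [|c m F _ _ IH]; first by rewrite !raddf0 !horner0.
rewrite !raddfD /= !hornerD IH dehomog_monomial mevalZ mevalX.
rewrite big1 => [|i _]; last exact: expr1n.
by rewrite !hornerE !expr1n !mulr1.
Qed.

Lemma coef_dehomog F a b :
  ((dehomog F)`_b)`_a = \sum_(m <- msupp F) F@_m *+ ((m i0 == a) && (m i2 == b)).
Proof.
rewrite {1}(mpolyE F) raddf_sum !coef_sum; apply: eq_bigr => m _ /=.
rewrite dehomog_monomial coefCM coefXn mulr_natr coefMn coefCM coefXn mulr_natr.
by rewrite -mulrnA !(eq_sym (m _)); case: (a == _); case: (b == _).
Qed.

Lemma dehomog_neq0 F : quasi_homogeneous k F -> F != 0 -> dehomog F != 0.
Proof.
move=> [d homF] F0; have [m0 m0F] : exists m0, m0 \in msupp F.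
  move: F0; rewrite -msupp_eq0.
  by case: (msupp F) => // m0 s _; exists m0; rewrite mem_head.
apply/eqP => /(congr1 (fun p : {poly {poly CC}} => p`_(m0 i2)`_(m0 i0))).
rewrite coef_dehomog !coef0 (bigD1_seq m0) ?msupp_uniq //= !eqxx mulr1n.
rewrite big_seq_cond big1 ?addr0 => [F0m0|m /andP [mF ne_m]].
  by move: m0F; rewrite mcoeff_msupp F0m0 eqxx.
case: andP => [[/eqP e0 /eqP e2]|_]; last by rewrite mulr0n.
by case/eqP: ne_m; apply: (eq_monomial_of_wdeg (k := k)) e0 e2; rewrite !homF.
Qed.

End Dehomogenization.

Theorem lemma4p10 (k : nat) : (1 < k)%N ->
  forall F : poly3,
    quasi_homogeneous k F -> nonconstant F -> invariant_by k F ->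
    ~ vanishes_at_111 F.
Proof.
move=> lt1k F homF ncF [Theta invF] vanF.
have F0 : F != 0 by apply/eqP => F0; apply: (ncF 0); rewrite F0 mpolyC0.
have derVF : derV k (dehomog F) = - dehomog (Theta i0 i2) * dehomog F.
  by rewrite -[derV _ _]opprK -dehomog_wedge02 invF // rmorphM mulrC mulNr.
have := invariant_horner11_neq0 (ltnW lt1k) (dehomog_neq0 homF F0) derVF.
by rewrite horner11_dehomog vanF eqxx.
Qed.
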